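(* Let $\mathfrak{g}=\mathfrak{sl}_2(\mathbb{R})$ or $\mathfrak{g}=\mathfrak{so}(3)$. For every integer $n\ge1$, \[S^{\mathfrak{g}}_{2n}(\mathfrak{g},\mathfrak{g})=0\quad\text{and}\quad S^{\mathfrak{g}}_{2n+1}(\mathfrak{g},\mathfrak{g})=\mathbb{R}\,B^{\mathfrak{g}}_n.\]
   Context: $\mathfrak{sl}_2(\mathbb{R})$: traceless real $2\times2$ matrices; $\mathfrak{so}(3)$: skew-symmetric real $3\times3$ matrices. $S^{\mathfrak{g}}_m(\mathfrak{g},\mathfrak{g})$ is the space of symmetric $\mathbb{R}$-multilinear maps $B:\mathfrak{g}^m\to\mathfrak{g}$ that are invariant: $[y,B(x_1,\ldots,x_m)]=\sum_{i=1}^mB(x_1,\ldots,[y,x_i],\ldots,x_m)$ for all $y,x_i$. Let $\langle\cdot,\cdot\rangle$ be the symmetric bilinear form with $\langle x,x\rangle=\frac12\mathrm{tr}(\mathrm{ad}_x^2)$. For $n\ge1$ let $P_n(x_1,\ldots,x_{2n})=\frac{1}{(2n)!}\sum_{\sigma\in S_{2n}}\langle x_{\sigma(1)},x_{\sigma(2)}\rangle\cdots\langle x_{\sigma(2n-1)},x_{\sigma(2n)}\rangle$ and $B^{\mathfrak{g}}_n(x_1,\ldots,x_{2n+1})=\sum_{k=1}^{2n+1}P_n(x_1,\ldots,\hat{x}_k,\ldots,x_{2n+1})\,x_k$ (hat denotes omission). *)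

From HB Require Import structures.
From mathcomp Require Import all_boot all_order all_algebra all_fingroup.
From mathcomp Require Import Rstruct zify.
Set Implicit Arguments. Unset Strict Implicit. Unset Printing Implicit Defensive.
Import Order.TTheory GRing.Theory Num.Theory.
Local Open Scope ring_scope.

Notation RR := Rdefinitions.R.

Definition lbr (k : nat) (x y : 'M[RR]_k) : 'M[RR]_k := x *m y - y *m x.

(* trace of an endomorphism f of the subspace g (f assumed to preserve g),
   computed in the basis vbasis g *)
Definition vtr (k : nat) (g : {vspace 'M[RR]_k}) (f : 'M[RR]_k -> 'M[RR]_k) : RR :=
  \sum_(i < \dim g) coord (vbasis g) i (f (tnth (vbasis g) i)).

Definition kform (k : nat) (g : {vspace 'M[RR]_k}) (x y : 'M[RR]_k) : RR :=
  2^-1 * vtr g (fun z => lbr x (lbr y z)).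

Lemma dbl_lt (n : nat) (j : 'I_n) (b : bool) : (j.*2 + b < n.*2)%N.
Proof. case: j => j /= hj; case: b; rewrite /= -!muln2; lia. Qed.

Definition pidx (n : nat) (j : 'I_n) (b : bool) : 'I_(n.*2) := Ordinal (dbl_lt j b).

Definition Pn (k : nat) (g : {vspace 'M[RR]_k}) (n : nat) (x : 'I_(n.*2) -> 'M[RR]_k) : RR :=
  ((n.*2)`!%:R)^-1 *
  \sum_(s : 'S_(n.*2)) \prod_(j < n) kform g (x (s (pidx j false))) (x (s (pidx j true))).

Arguments Pn {k} g n x.

Definition Bn (k : nat) (g : {vspace 'M[RR]_k}) (n : nat)
    (x : 'I_(n.*2.+1) -> 'M[RR]_k) : 'M[RR]_k :=
  \sum_(i < n.*2.+1) Pn g n (fun j : 'I_(n.*2) => x (lift i j)) *: x i.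

Arguments Bn {k} g n x.

Definition upd (k m : nat) (x : 'I_m -> 'M[RR]_k) (i : 'I_m) (v : 'M[RR]_k) : 'I_m -> 'M[RR]_k :=
  fun j => if j == i then v else x j.

Definition in_g (k m : nat) (g : {vspace 'M[RR]_k}) (x : 'I_m -> 'M[RR]_k) : Prop :=
  forall i, x i \in g.

(* B (restricted to g^m) is an element of S^g_m(g,g): g-valued, R-multilinear,
   symmetric and g-invariant *)
Definition inS (k m : nat) (g : {vspace 'M[RR]_k}) (B : ('I_m -> 'M[RR]_k) -> 'M[RR]_k) : Prop :=
  [/\ (forall x, in_g g x -> B x \in g),
      (forall x i (a : RR) y z, in_g g x -> y \in g -> z \in g ->
          B (upd x i (a *: y + z)) = a *: B (upd x i y) + B (upd x i z)),
      (forall x (s : 'S_m), in_g g x -> B (fun j => x (s j)) = B x)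
    & (forall y x, y \in g -> in_g g x ->
          lbr y (B x) = \sum_(i < m) B (upd x i (lbr y (x i))))].

(* Fix a basis u of g and weights eta such that the form (v, w) := sum_c eta_c v_c w_c in
   u-coordinates is invariant.  The Casimir operator Omega = sum_c eta_c ad(u_c)^2 then
   acts on g as a scalar -2 lam <> 0.  For an invariant symmetric F : g^m -> g, expanding
   ad(u_c)^2 (F x) by invariance and summing over c gives
     lam (m - 1)(m + 2) F(x) = lam sum_(i <> j) (x_i, x_j) (C F)(x without x_i, x_j),
   where C F in S_(m-2) contracts two arguments of F with sum_c eta_c u_c (x) u_c.  The
   cross terms are evaluated with the identity
     sum_c eta_c [u_c, v] (x) [u_c, w] = lam ((v, w) sum_c eta_c u_c (x) u_c - w (x) v),
   which holds because g is three-dimensional.  So for m <> 1, F vanishes as soon as C F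
   does.  Since S_0 = 0 and S_1 = R id (Schur), induction gives S_(2n) = 0 and
   dim S_(2n+1) <= 1.  Finally B_n lies in S_(2n+1) because <,> is invariant, and
   B_n(v, ..., v) = (2n + 1) <v, v>^n v is nonzero when <v, v> <> 0. *)

From HB Require Import structures.
From mathcomp Require Import all_boot all_order all_algebra all_fingroup.
From mathcomp Require Import Rstruct zify ring lra.
From Stdlib Require Import FunctionalExtensionality.
Import Order.TTheory GRing.Theory Num.Theory.
Local Open Scope ring_scope.
Set Implicit Arguments. Unset Strict Implicit. Unset Printing Implicit Defensive.

Section Bracket.
Variable k : nat.
Notation M := 'M[RR]_k.
Implicit Types x y z : M.

Lemma lbrDr x y z (a : RR) : lbr x (a *: y + z) = a *: lbr x y + lbr x z.
Proof. by rewrite /lbr mulmxDr mulmxDl -scalemxAr -scalemxAl scalerBr addrACA opprD. Qed.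

Lemma lbrDl x y z (a : RR) : lbr (a *: x + y) z = a *: lbr x z + lbr y z.
Proof. by rewrite /lbr mulmxDr mulmxDl -scalemxAr -scalemxAl scalerBr addrACA opprD. Qed.

Lemma lbrAr x y z : lbr x (y + z) = lbr x y + lbr x z.
Proof. by rewrite /lbr mulmxDr mulmxDl addrACA opprD. Qed.

Lemma lbrAl x y z : lbr (x + y) z = lbr x z + lbr y z.
Proof. by rewrite /lbr mulmxDr mulmxDl addrACA opprD. Qed.

Lemma lbr0r x : lbr x 0 = 0.
Proof. by rewrite /lbr mulmx0 mul0mx subrr. Qed.

Lemma lbr0l x : lbr 0 x = 0.
Proof. by rewrite /lbr mulmx0 mul0mx subrr. Qed.

Lemma lbrZr x y a : lbr x (a *: y) = a *: lbr x y.
Proof. by rewrite -[a *: y]addr0 lbrDr lbr0r addr0. Qed.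

Lemma lbrZl x y a : lbr (a *: x) y = a *: lbr x y.
Proof. by rewrite -[a *: x]addr0 lbrDl lbr0l addr0. Qed.

Lemma lbrxx x : lbr x x = 0.
Proof. exact: subrr. Qed.

Lemma lbrC x y : lbr y x = - lbr x y.
Proof. by rewrite /lbr opprB. Qed.

Lemma lbrBr x y z : lbr x (y - z) = lbr x y - lbr x z.
Proof. by rewrite -scaleN1r addrC lbrDr scaleN1r addrC. Qed.

Lemma lbr_sumr (I : Type) (r : seq I) x (F : I -> M) :
  lbr x (\sum_(i <- r) F i) = \sum_(i <- r) lbr x (F i).
Proof.
elim: r => [|a r IH]; first by rewrite !big_nil lbr0r.
by rewrite !big_cons lbrAr IH.
Qed.

Lemma lbr_suml (I : Type) (r : seq I) x (F : I -> M) :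
  lbr (\sum_(i <- r) F i) x = \sum_(i <- r) lbr (F i) x.
Proof.
elim: r => [|a r IH]; first by rewrite !big_nil lbr0l.
by rewrite !big_cons lbrAl IH.
Qed.

Lemma lbr_jacobi x y z : lbr (lbr x y) z = lbr x (lbr y z) - lbr y (lbr x z).
Proof.
rewrite /lbr !mulmxBl !mulmxBr !mulmxA.
move: (x *m y *m z) (y *m x *m z) (z *m x *m y) (z *m y *m x) (x *m z *m y) (y *m z *m x).
by move=> A B C D E F; apply/matrixP => i j; rewrite !mxE; ring.
Qed.

End Bracket.

Section Arguments.
Variables (k m : nat).
Notation M := 'M[RR]_k.
Implicit Types (x : 'I_m -> M) (v w : M).

Lemma upd_same x i v : upd x i v i = v.
Proof. by rewrite /upd eqxx. Qed.

Lemma upd_other x i v j : j != i -> upd x i v j = x j.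
Proof. by rewrite /upd => /negbTE ->. Qed.

Lemma upd_upd x i v w : upd (upd x i v) i w = upd x i w.
Proof. by apply: functional_extensionality => j; rewrite /upd; case: (j == i). Qed.

Lemma updC x i j v w : i != j -> upd (upd x i v) j w = upd (upd x j w) i v.
Proof.
move=> ij; apply: functional_extensionality => t; rewrite /upd.
by case: (eqVneq t j) => [->|//]; rewrite eq_sym (negbTE ij).
Qed.

Lemma upd_id x i : upd x i (x i) = x.
Proof. by apply: functional_extensionality => j; rewrite /upd; case: eqP => [->|]. Qed.

Lemma in_g_upd (g : {vspace M}) x i v : in_g g x -> v \in g -> in_g g (upd x i v).
Proof. by move=> gx gv j; rewrite /upd; case: (j == i). Qed.

Lemma upd_tperm x i j : i != j -> upd (upd x i (x j)) j (x i) = (fun t => x (tperm i j t)).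
Proof.
move=> ij; apply: functional_extensionality => t; rewrite /upd.
case: (eqVneq t j) => [->|tj]; first by rewrite tpermR.
case: (eqVneq t i) => [->|ti]; first by rewrite tpermL.
by rewrite tpermD // eq_sym.
Qed.

Lemma upd_perm x (s : 'S_m) i v :
  (fun t => upd x i v (s t)) = upd (fun t => x (s t)) ((s^-1)%g i) v.
Proof.
apply: functional_extensionality => t; rewrite /upd.
by rewrite (canF_eq (permK s)).
Qed.

End Arguments.

Section LiftArguments.
Variables (k m : nat).
Notation M := 'M[RR]_k.

Lemma upd_lift (x : 'I_m.+1 -> M) i t v :
  (fun j => upd x (lift i t) v (lift i j)) = upd (fun j => x (lift i j)) t v.
Proof. by apply: functional_extensionality => j; rewrite /upd (inj_eq (@lift_inj _ i)). Qed.

Lemma upd_lift_same (x : 'I_m.+1 -> M) i v :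
  (fun j => upd x i v (lift i j)) = (fun j => x (lift i j)).
Proof. by apply: functional_extensionality => j; rewrite upd_other // eq_sym neq_lift. Qed.

End LiftArguments.

Section Cons2.
Variables (k m : nat).
Notation M := 'M[RR]_k.
Implicit Types (y : 'I_m -> M) (p q v : M).

Definition cons2 p q y (t : 'I_m.+2) : M :=
  if unlift ord0 t is Some t' then
    if unlift ord0 t' is Some t'' then y t'' else q
  else p.

Definition slot1 : 'I_m.+2 := lift ord0 ord0.
Definition slot2 (i : 'I_m) : 'I_m.+2 := lift ord0 (lift ord0 i).

Lemma cons2_0 p q y : cons2 p q y ord0 = p.
Proof. by rewrite /cons2 unlift_none. Qed.

Lemma cons2_1 p q y : cons2 p q y slot1 = q.
Proof. by rewrite /cons2 /slot1 liftK unlift_none. Qed.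

Lemma cons2_2 p q y i : cons2 p q y (slot2 i) = y i.
Proof. by rewrite /cons2 /slot2 !liftK. Qed.

Lemma cons2P (t : 'I_m.+2) : [\/ t = ord0, t = slot1 | exists i, t = slot2 i].
Proof.
case: (unliftP ord0 t) => [t' ->|->]; last exact: Or31.
case: (unliftP ord0 t') => [t'' ->|->]; last exact: Or32.
by apply: Or33; exists t''.
Qed.

Lemma slot1_neq0 : slot1 != ord0.
Proof. by []. Qed.

Lemma slot2_neq0 i : slot2 i != ord0.
Proof. by rewrite eq_sym neq_lift. Qed.

Lemma slot2_neq1 i : slot2 i != slot1.
Proof. by rewrite (inj_eq (@lift_inj _ ord0)) eq_sym neq_lift. Qed.

Lemma slot2_inj : injective slot2.
Proof. by move=> i j /lift_inj /lift_inj. Qed.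

Lemma in_g_cons2 (g : {vspace M}) p q y :
  p \in g -> q \in g -> in_g g y -> in_g g (cons2 p q y).
Proof. by move=> gp gq gy t; case: (cons2P t) => [->|->|[i ->]]; rewrite ?cons2_0 ?cons2_1 ?cons2_2. Qed.

Lemma cons2_upd p q y i v : cons2 p q (upd y i v) = upd (cons2 p q y) (slot2 i) v.
Proof.
apply: functional_extensionality => t; case: (cons2P t) => [->|->|[j ->]].
- by rewrite cons2_0 upd_other ?cons2_0 // eq_sym slot2_neq0.
- by rewrite cons2_1 upd_other ?cons2_1 // eq_sym slot2_neq1.
by rewrite cons2_2 /upd (inj_eq slot2_inj); case: (j == i); rewrite ?cons2_2.
Qed.

Lemma upd_cons2_0 p q y v : upd (cons2 p q y) ord0 v = cons2 v q y.
Proof.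
apply: functional_extensionality => t; case: (cons2P t) => [->|->|[j ->]].
- by rewrite upd_same cons2_0.
- by rewrite upd_other ?slot1_neq0 // !cons2_1.
- by rewrite upd_other ?slot2_neq0 // !cons2_2.
Qed.

Lemma upd_cons2_1 p q y v : upd (cons2 p q y) slot1 v = cons2 p v y.
Proof.
apply: functional_extensionality => t; case: (cons2P t) => [->|->|[j ->]].
- by rewrite upd_other 1?eq_sym ?slot1_neq0 // !cons2_0.
- by rewrite upd_same cons2_1.
- by rewrite upd_other ?slot2_neq1 // !cons2_2.
Qed.

Lemma cons2_perm p q y (s : 'S_m) :
  cons2 p q (fun j => y (s j)) =
  (fun t => cons2 p q y (lift_perm ord0 ord0 (lift_perm ord0 ord0 s) t)).
Proof.
apply: functional_extensionality => t; case: (cons2P t) => [->|->|[j ->]].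
- by rewrite lift_perm_id !cons2_0.
- by rewrite /slot1 lift_perm_lift lift_perm_id -/slot1 !cons2_1.
- by rewrite /slot2 !lift_perm_lift -!/(slot2 _) !cons2_2.
Qed.

End Cons2.

(** * Invariant symmetric multilinear maps *)

Section Invariant.
Variables (k : nat) (g : {vspace 'M[RR]_k}).
Notation M := 'M[RR]_k.

Definition lin_on (L : M -> M) :=
  forall a y z, y \in g -> z \in g -> L (a *: y + z) = a *: L y + L z.

Lemma lin_on0 L : lin_on L -> L 0 = 0.
Proof.
move=> linL; have := linL 1 0 0 (mem0v g) (mem0v g).
by rewrite !scale1r addr0 => h; apply: (@addrI _ (L 0)); rewrite addr0 -h.
Qed.

Lemma lin_onZ L a y : lin_on L -> y \in g -> L (a *: y) = a *: L y.
Proof. by move=> linL gy; rewrite -[a *: y]addr0 linL ?mem0v // lin_on0 // addr0. Qed.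

Lemma lin_on_sum L (J : Type) (r : seq J) (a : J -> RR) (v : J -> M) :
  lin_on L -> (forall j, v j \in g) ->
  L (\sum_(j <- r) a j *: v j) = \sum_(j <- r) a j *: L (v j).
Proof.
move=> linL gv; elim: r => [|j r IH]; first by rewrite !big_nil lin_on0.
rewrite !big_cons linL ?IH //; apply: rpred_sum => i _; exact: rpredZ.
Qed.

Lemma lin_on_lbr x : lin_on (lbr x).
Proof. by move=> a y z _ _; exact: lbrDr. Qed.

Section Slots.
Variables (m : nat) (F : ('I_m -> M) -> M).
Hypothesis SF : inS g F.

Lemma inS_lin_slot x i : in_g g x -> lin_on (fun v => F (upd x i v)).
Proof. by case: SF => _ linF _ _ gx a y z; exact: linF. Qed.

Lemma inS_lin_slot2l x i j q : in_g g x -> i != j -> q \in g ->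
  lin_on (fun p => F (upd (upd x i p) j q)).
Proof.
move=> gx ij gq a y z gy gz /=; rewrite !(updC _ _ _ ij).
exact: (inS_lin_slot i (in_g_upd j gx gq)).
Qed.

Lemma inS_lin_slot2r x i j p : in_g g x -> p \in g ->
  lin_on (fun q => F (upd (upd x i p) j q)).
Proof. by move=> gx gp; exact: (inS_lin_slot j (in_g_upd i gx gp)). Qed.

Hypothesis lbr_closed : forall x y, x \in g -> y \in g -> lbr x y \in g.

Lemma inS_lbr2 y x : y \in g -> in_g g x ->
  lbr y (lbr y (F x)) =
  \sum_i (F (upd x i (lbr y (lbr y (x i)))) +
          \sum_(j | j != i) F (upd (upd x i (lbr y (x i))) j (lbr y (x j)))).
Proof.
have [_ _ _ invF] := SF; move=> gy gx.
rewrite invF // lbr_sumr; apply: eq_bigr => i _.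
rewrite (invF _ _ gy (in_g_upd i gx (lbr_closed gy (gx i)))) (bigD1 i) //= upd_same upd_upd.
by congr (_ + _); apply: eq_bigr => j ji; rewrite upd_other.
Qed.

End Slots.

Lemma inS_comb m (F G : ('I_m -> M) -> M) (a b : RR) :
  inS g F -> inS g G -> inS g (fun x => a *: F x + b *: G x).
Proof.
move=> [gF linF symF invF] [gG linG symG invG]; split.
- by move=> x gx; rewrite rpredD ?rpredZ ?gF ?gG.
- move=> x i c y z gx gy gz; rewrite linF // linG //.
  by apply/matrixP => r s; rewrite !mxE; ring.
- by move=> x s gx; rewrite symF ?symG.
move=> y x gy gx; rewrite lbrAr !lbrZr invF // invG // !scaler_sumr -big_split.
by apply: eq_bigr.
Qed.

Definition dependent_on m (F G : ('I_m -> M) -> M) :=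
  exists a b : RR, (a, b) != (0, 0) /\ forall x, in_g g x -> a *: F x + b *: G x = 0.

End Invariant.

(** * The form <,> and the maps B_n *)

Section KillingForm.
Variables (k : nat) (g : {vspace 'M[RR]_k}).
Notation M := 'M[RR]_k.
Implicit Types (F G : M -> M).

Lemma vtrD F G a : vtr g (fun z => a *: F z + G z) = a * vtr g F + vtr g G.
Proof. by rewrite /vtr mulr_sumr -big_split; apply: eq_bigr => i _; rewrite linearD linearZ. Qed.

Lemma vtrB F G : vtr g (fun z => F z - G z) = vtr g F - vtr g G.
Proof. by rewrite /vtr -sumrB; apply: eq_bigr => i _; rewrite linearB. Qed.

Lemma eq_vtr F G : {in g, F =1 G} -> vtr g F = vtr g G.
Proof. by move=> e; apply: eq_bigr => i _; rewrite e // vbasis_mem ?mem_tnth. Qed.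

Lemma vbasis_in i : tnth (vbasis g) i \in g.
Proof. by apply: vbasis_mem; rewrite mem_tnth. Qed.

Lemma vbasis_coord v : v \in g -> v = \sum_i coord (vbasis g) i v *: tnth (vbasis g) i.
Proof. by move=> gv; rewrite {1}(coord_vbasis gv); apply: eq_bigr => i _; rewrite (tnth_nth 0). Qed.

Lemma vtr_comp F G : lin_on g F -> {in g, forall v, G v \in g} ->
  vtr g (fun z => F (G z)) =
  \sum_i \sum_j coord (vbasis g) j (G (tnth (vbasis g) i)) *
                coord (vbasis g) i (F (tnth (vbasis g) j)).
Proof.
move=> linF gG; apply: eq_bigr => i _.
rewrite {1}(vbasis_coord (gG _ (vbasis_in i))) (lin_on_sum _ _ linF vbasis_in) linear_sum.
by apply: eq_bigr => j _; rewrite linearZ.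
Qed.

Lemma vtrC F G : lin_on g F -> {in g, forall v, G v \in g} ->
  lin_on g G -> {in g, forall v, F v \in g} ->
  vtr g (fun z => F (G z)) = vtr g (fun z => G (F z)).
Proof.
move=> linF gG linG gF; rewrite !vtr_comp // exchange_big /=.
by apply: eq_bigr => i _; apply: eq_bigr => j _; rewrite mulrC.
Qed.

Lemma kformDl x y z a : kform g (a *: x + y) z = a * kform g x z + kform g y z.
Proof.
rewrite /kform (@eq_vtr _ (fun w => a *: lbr x (lbr z w) + lbr y (lbr z w))).
  by rewrite vtrD mulrDr mulrCA.
by move=> v _; rewrite lbrDl.
Qed.

Lemma kformDr x y z a : kform g x (a *: y + z) = a * kform g x y + kform g x z.
Proof.
rewrite /kform (@eq_vtr _ (fun w => a *: lbr x (lbr y w) + lbr x (lbr z w))).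
  by rewrite vtrD mulrDr mulrCA.
by move=> v _; rewrite lbrDl lbrDr.
Qed.

Hypothesis lbr_closed : forall x y, x \in g -> y \in g -> lbr x y \in g.

Lemma kform_inv y a b : y \in g -> a \in g -> b \in g ->
  kform g (lbr y a) b + kform g a (lbr y b) = 0.
Proof.
move=> gy ga gb; rewrite /kform -mulrDr.
rewrite (@eq_vtr _ (fun z => lbr y (lbr a (lbr b z)) - lbr a (lbr y (lbr b z)))); last first.
  by move=> v _; rewrite lbr_jacobi.
rewrite (@eq_vtr (fun z => lbr a (lbr (lbr y b) z))
                 (fun z => lbr a (lbr y (lbr b z)) - lbr a (lbr b (lbr y z)))); last first.
  by move=> v _; rewrite lbr_jacobi lbrBr.
rewrite (vtrB (fun z => lbr y (lbr a (lbr b z))) (fun z => lbr a (lbr y (lbr b z)))).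
rewrite (vtrB (fun z => lbr a (lbr y (lbr b z))) (fun z => lbr a (lbr b (lbr y z)))) addrA subrK.
rewrite (_ : vtr g _ = vtr g (fun z => lbr a (lbr b (lbr y z)))) ?subrr ?mulr0 //.
apply: (@vtrC (lbr y) (fun z => lbr a (lbr b z))).
- exact: lin_on_lbr.
- by move=> v gv; rewrite !lbr_closed.
- by move=> c p q _ _ /=; rewrite !lbrDr.
- by move=> v gv; rewrite lbr_closed.
Qed.

End KillingForm.

Section InvariantPolynomial.
Variables (k : nat) (g : {vspace 'M[RR]_k}).
Notation M := 'M[RR]_k.
Hypothesis lbr_closed : forall x y, x \in g -> y \in g -> lbr x y \in g.

Lemma pidx_inj n (j j' : 'I_n) b b' : pidx j b = pidx j' b' -> j = j' /\ b = b'.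
Proof.
move=> /(congr1 val) /= e.
have eb : b = b' by move: (congr1 odd e); rewrite !oddD !odd_double; case: (b); case: (b').
by subst b'; split => //; apply: val_inj; move: e => /=; case: (b) => /=; lia.
Qed.

Lemma pidx_neq n (j j' : 'I_n) b b' : j != j' -> pidx j b != pidx j' b'.
Proof. by move=> jj'; apply/eqP => /pidx_inj [e _]; rewrite e eqxx in jj'. Qed.

Lemma pidx_neqb n (j : 'I_n) b : pidx j b != pidx j (~~ b).
Proof. by apply/eqP => /pidx_inj [_]; case: b. Qed.

Lemma pidx_surj n (t : 'I_n.*2) : exists j b, t = pidx j b.
Proof.
have ht : (t./2 < n)%N by rewrite ltn_half_double.
by exists (Ordinal ht), (odd t); apply: val_inj; rewrite /= -[LHS]odd_double_half addnC.
Qed.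

Lemma sum_pidx (V : zmodType) n (F : 'I_n.*2 -> V) :
  \sum_t F t = \sum_(j < n) (F (pidx j false) + F (pidx j true)).
Proof.
pose h (p : 'I_n * bool) := pidx p.1 p.2.
have ht (t : 'I_n.*2) : (t./2 < n)%N by rewrite ltn_half_double.
pose h' (t : 'I_n.*2) := (Ordinal (ht t), odd t).
have hK : cancel h h'.
  move=> [j b]; rewrite /h /h'; congr (_, _); last by rewrite /= oddD odd_double; case: b.
  by apply: val_inj; rewrite /= addnC half_bit_double.
have h'K : cancel h' h.
  by move=> t; apply: val_inj; rewrite /h /h' /= -[RHS]odd_double_half addnC.
rewrite (reindex h (onW_bij _ (Bijective hK h'K))) /=.
rewrite -(pair_big xpredT xpredT (fun j b => F (h (j, b)))) /=.
by apply: eq_bigr => j _; rewrite big_bool addrC.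
Qed.

Definition pprod n (y : 'I_n.*2 -> M) : RR :=
  \prod_(j < n) kform g (y (pidx j false)) (y (pidx j true)).

Lemma pprod_upd n (y : 'I_n.*2 -> M) j0 b0 v :
  pprod (upd y (pidx j0 b0) v) =
  (if b0 then kform g (y (pidx j0 false)) v else kform g v (y (pidx j0 true))) *
  \prod_(j < n | j != j0) kform g (y (pidx j false)) (y (pidx j true)).
Proof.
rewrite /pprod (bigD1 j0) //=; congr (_ * _).
  by case: b0; rewrite upd_same upd_other // ?(pidx_neqb j0 false) ?(pidx_neqb j0 true).
by apply: eq_bigr => j jj0; rewrite !upd_other // pidx_neq.
Qed.

Lemma pprod_lin n (y : 'I_n.*2 -> M) t a v w :
  pprod (upd y t (a *: v + w)) = a * pprod (upd y t v) + pprod (upd y t w).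
Proof.
have [j0 [b0 ->]] := pidx_surj t.
by rewrite !pprod_upd; case: b0; rewrite ?kformDr ?kformDl mulrDl mulrA.
Qed.

Lemma pprod_der n (y : 'I_n.*2 -> M) (D : M -> M) :
  (forall p q, p \in g -> q \in g -> kform g (D p) q + kform g p (D q) = 0) -> in_g g y ->
  \sum_t pprod (upd y t (D (y t))) = 0.
Proof.
move=> Dskew gy; rewrite sum_pidx big1 // => j _.
by rewrite !pprod_upd -mulrDl Dskew ?mul0r.
Qed.

Lemma PnE n (x : 'I_n.*2 -> M) :
  Pn g n x = ((n.*2)`!%:R)^-1 * \sum_(s : 'S_(n.*2)) pprod (fun t => x (s t)).
Proof. by []. Qed.

Lemma Pn_lin n (x : 'I_n.*2 -> M) i a v w :
  Pn g n (upd x i (a *: v + w)) = a * Pn g n (upd x i v) + Pn g n (upd x i w).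
Proof.
rewrite !PnE; under eq_bigr => s _ do rewrite upd_perm pprod_lin -!upd_perm.
by rewrite big_split /= -mulr_sumr mulrDr mulrCA.
Qed.

Lemma Pn_sym n (x : 'I_n.*2 -> M) (s : 'S_(n.*2)) : Pn g n (fun t => x (s t)) = Pn g n x.
Proof.
rewrite !PnE [in RHS](reindex_inj (mulIg s)) /=; congr (_ * _).
by apply: eq_bigr => s' _; apply: eq_bigr => j _; rewrite !permM.
Qed.

Lemma Pn_der n (x : 'I_n.*2 -> M) (D : M -> M) :
  (forall p q, p \in g -> q \in g -> kform g (D p) q + kform g p (D q) = 0) -> in_g g x ->
  \sum_t Pn g n (upd x t (D (x t))) = 0.
Proof.
move=> Dskew gx; under eq_bigr => t _ do rewrite PnE.
rewrite -mulr_sumr exchange_big /= big1 ?mulr0 // => s _.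
rewrite (reindex_inj (@perm_inj _ s)) /=.
under eq_bigr => t _ do rewrite upd_perm permK.
exact: pprod_der.
Qed.

Lemma Pn_const n v : Pn g n (fun _ => v) = kform g v v ^+ n.
Proof.
rewrite /Pn; under eq_bigr do rewrite prodr_const card_ord.
rewrite sumr_const card_Sn -(mulr_natr (kform g v v ^+ n)) mulrCA mulVf ?mulr1 //.
by rewrite pnatr_eq0 -lt0n fact_gt0.
Qed.

Lemma Bn_lin n x i a v w :
  Bn g n (upd x i (a *: v + w)) = a *: Bn g n (upd x i v) + Bn g n (upd x i w).
Proof.
rewrite /Bn scaler_sumr -big_split; apply: eq_bigr => i' _ /=.
case: (unliftP i' i) => [t ->|->].
  by rewrite !upd_lift !upd_other ?neq_lift // Pn_lin scalerDl scalerA.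
by rewrite !upd_lift_same !upd_same scalerDr !scalerA mulrC.
Qed.

Lemma Bn_sym n x (s : 'S_(n.*2.+1)) : Bn g n (fun j => x (s j)) = Bn g n x.
Proof.
rewrite /Bn [in RHS](reindex_inj (@perm_inj _ s)) /=; apply: eq_bigr => i _; congr (_ *: _).
pose r (j : 'I_n.*2) := odflt j (unlift (s i) (s (lift i j))).
have liftr j : lift (s i) (r j) = s (lift i j).
  rewrite /r; case: (unliftP (s i) (s (lift i j))) => [j' -> //|/perm_inj/eqP].
  by rewrite eq_sym (negbTE (neq_lift _ _)).
have r_inj : injective r.
  by move=> j1 j2 e; apply: (@lift_inj _ i); apply: (@perm_inj _ s); rewrite -!liftr e.
rewrite -[RHS](Pn_sym _ (perm r_inj)); congr Pn; apply: functional_extensionality => j.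
by rewrite permE liftr.
Qed.

Lemma Bn_upd n x i v : Bn g n (upd x i v) =
  Pn g n (fun j => x (lift i j)) *: v +
  \sum_(i' | i' != i) Pn g n (fun j => upd x i v (lift i' j)) *: x i'.
Proof.
rewrite /Bn (bigD1 i) //= upd_lift_same upd_same; congr (_ + _).
by apply: eq_bigr => i' i'i; rewrite upd_other.
Qed.

Lemma Bn_inv n y x : y \in g -> in_g g x ->
  lbr y (Bn g n x) = \sum_i Bn g n (upd x i (lbr y (x i))).
Proof.
move=> gy gx; under [RHS]eq_bigr do rewrite Bn_upd.
rewrite big_split /= lbr_sumr [X in _ + X](_ : _ = 0) ?addr0.
  by apply: eq_bigr => i _; rewrite lbrZr.
under eq_bigr do rewrite big_mkcond.
rewrite exchange_big big1 //= => i' _.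
rewrite (bigD1_ord i') //= eqxx add0r.
under eq_bigr => t _ do rewrite neq_lift upd_lift.
by rewrite -scaler_suml Pn_der ?scale0r // => p q; exact: kform_inv.
Qed.

Lemma inS_Bn n : inS g (Bn g n).
Proof.
split=> [x gx|x i a v w _ _ _|x s _|y x gy gx].
- by apply: rpred_sum => i _; exact: rpredZ.
- exact: Bn_lin.
- exact: Bn_sym.
- exact: Bn_inv.
Qed.

Lemma Bn_const n v : Bn g n (fun _ => v) = ((n.*2.+1)%:R * kform g v v ^+ n) *: v.
Proof.
rewrite /Bn; under eq_bigr do rewrite Pn_const.
by rewrite sumr_const card_ord -scaler_nat scalerA.
Qed.

End InvariantPolynomial.

(** * The Casimir argument *)

Lemma sum_neq_const (V : zmodType) m (i : 'I_m) (c : V) :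
  \sum_(j < m | j != i) c = c *+ m - c.
Proof.
have e : \sum_(j < m) c = c *+ m by rewrite sumr_const card_ord.
by rewrite (bigD1 i) //= in e; rewrite -e addrC addrK.
Qed.


Section Casimir.
Variables (k : nat) (g : {vspace 'M[RR]_k}) (I : finType).
Notation M := 'M[RR]_k.
Variables (u : I -> M) (co : I -> M -> RR) (f : I -> I -> I -> RR) (eta : I -> RR) (lam : RR).
Hypothesis co_linear : forall a c x y, co a (c *: x + y) = c * co a x + co a y.
Hypothesis u_in : forall a, u a \in g.
Hypothesis co_u : forall a b, co a (u b) = (a == b)%:R.
Hypothesis co_decomp : forall x, x \in g -> x = \sum_a co a x *: u a.
Hypothesis lbr_u : forall a b, lbr (u a) (u b) = \sum_c f a b c *: u c.

Lemma co0 a : co a 0 = 0.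
Proof. by have := co_linear a 1 0 0; rewrite scale1r addr0 mul1r => h; lra. Qed.

Lemma coZ a c x : co a (c *: x) = c * co a x.
Proof. by rewrite -[c *: x]addr0 co_linear co0 addr0. Qed.

Lemma coD a x y : co a (x + y) = co a x + co a y.
Proof. by rewrite -[x]scale1r co_linear mul1r scale1r. Qed.

Lemma co_sum a (J : Type) (r : seq J) (F : J -> M) :
  co a (\sum_(j <- r) F j) = \sum_(j <- r) co a (F j).
Proof. by elim: r => [|j r IH]; rewrite ?big_nil ?co0 // !big_cons coD IH. Qed.

Lemma sum_delta (F : I -> RR) a : \sum_b F b * (a == b)%:R = F a.
Proof.
rewrite (bigD1 a) //= eqxx mulr1 big1 ?addr0 // => b /negbTE.
by rewrite eq_sym => ->; rewrite mulr0.
Qed.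

Lemma co_comb (x : I -> RR) a : co a (\sum_b x b *: u b) = x a.
Proof. by rewrite co_sum; under eq_bigr do rewrite coZ co_u; rewrite sum_delta. Qed.

Lemma lbr_in x y : x \in g -> y \in g -> lbr x y \in g.
Proof.
move=> gx gy; rewrite (co_decomp gx) lbr_suml; apply: rpred_sum => a _.
rewrite lbrZl (co_decomp gy) lbr_sumr; apply/rpredZ/rpred_sum => b _.
by rewrite lbrZr lbr_u; apply/rpredZ/rpred_sum => c _; exact: rpredZ.
Qed.

Lemma co_inj x y : x \in g -> y \in g -> (forall a, co a x = co a y) -> x = y.
Proof. by move=> gx gy e; rewrite (co_decomp gx) (co_decomp gy); apply: eq_bigr => a _; rewrite e. Qed.

Lemma co_lbr_ul l c z : z \in g -> co l (lbr (u c) z) = \sum_b co b z * f c b l.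
Proof.
move=> gz; rewrite {1}(co_decomp gz) lbr_sumr co_sum; apply: eq_bigr => b _.
by rewrite lbrZr coZ lbr_u co_comb.
Qed.

Lemma co_lbr_ur l c z : z \in g -> co l (lbr z (u c)) = \sum_b co b z * f b c l.
Proof.
move=> gz; rewrite {1}(co_decomp gz) lbr_suml co_sum; apply: eq_bigr => b _.
by rewrite lbrZl coZ lbr_u co_comb.
Qed.

Lemma vtr_basis (L : M -> M) : lin_on g L -> (forall v, v \in g -> L v \in g) ->
  vtr g L = \sum_a co a (L (u a)).
Proof.
move=> linL gL; rewrite /vtr.
under eq_bigr => i _.
  rewrite {1}(co_decomp (vbasis_in i)) (lin_on_sum _ _ linL u_in) linear_sum.
  under eq_bigr do rewrite linearZ.
  over.
rewrite exchange_big /=; apply: eq_bigr => a _.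
rewrite {2}(vbasis_coord (gL _ (u_in a))) co_sum; apply: eq_bigr => i _.
by rewrite coZ mulrC.
Qed.

Lemma kform_basis a : kform g (u a) (u a) = 2^-1 * \sum_b \sum_c f a b c * f a c b.
Proof.
rewrite /kform vtr_basis; last by move=> v gv; rewrite !lbr_in.
  congr (_ * _); apply: eq_bigr => b _.
  rewrite co_lbr_ul ?lbr_in //; apply: eq_bigr => c _.
  by rewrite lbr_u co_comb.
by move=> c p q _ _ /=; rewrite !lbrDr.
Qed.

Hypothesis casimir_f : forall (v : I -> RR) l,
  \sum_c eta c * (\sum_i (\sum_b v b * f c b i) * f c i l) = -2 * lam * v l.

Lemma casimir_scalar z : z \in g -> \sum_c eta c *: lbr (u c) (lbr (u c) z) = (-2 * lam) *: z.
Proof.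
move=> gz; apply: co_inj => [||l].
- by apply: rpred_sum => c _; rewrite rpredZ ?lbr_in.
- exact: rpredZ.
rewrite co_sum coZ -(casimir_f (fun b => co b z) l); apply: eq_bigr => c _.
rewrite coZ co_lbr_ul ?lbr_in //; congr (_ * _).
by apply: eq_bigr => i _; rewrite co_lbr_ul.
Qed.

Definition dot v w := \sum_a eta a * co a v * co a w.

(* Coordinate form of
   sum_c eta_c [u_c, v] (x) [u_c, w] = lam (dot v w sum_c eta_c u_c (x) u_c - w (x) v). *)
Hypothesis casimir_cross_f : forall (v w : I -> RR) i l,
  \sum_c eta c * ((\sum_b v b * f c b i) * (\sum_d w d * f c d l)) =
  lam * ((\sum_a eta a * v a * w a) * eta i * (i == l)%:R - w i * v l).
Hypothesis f_skew : forall a i l, eta l * f a l i + eta i * f a i l = 0.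

Section Bilinear.
Variable Phi : M -> M -> M.
Hypothesis Phi_linl : forall q, q \in g -> lin_on g (Phi^~ q).
Hypothesis Phi_linr : forall p, p \in g -> lin_on g (Phi p).

Lemma bilin_expand p q : p \in g -> q \in g ->
  Phi p q = \sum_i \sum_l (co i p * co l q) *: Phi (u i) (u l).
Proof.
move=> gp gq; rewrite {1}(co_decomp gp) (lin_on_sum _ _ (Phi_linl gq)) //.
apply: eq_bigr => i _; rewrite {1}(co_decomp gq) (lin_on_sum _ _ (Phi_linr (u_in i))) //.
by rewrite scaler_sumr; apply: eq_bigr => l _; rewrite scalerA.
Qed.

Lemma bilin_sum_expand (al : I -> RR) (P Q : I -> M) :
  (forall c, P c \in g) -> (forall c, Q c \in g) ->
  \sum_c al c *: Phi (P c) (Q c) =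
  \sum_i \sum_l (\sum_c al c * (co i (P c) * co l (Q c))) *: Phi (u i) (u l).
Proof.
move=> gP gQ; under eq_bigr do rewrite bilin_expand // scaler_sumr.
rewrite exchange_big; apply: eq_bigr => i _ /=.
under eq_bigr do rewrite scaler_sumr.
rewrite exchange_big; apply: eq_bigr => l _ /=.
by rewrite scaler_suml; apply: eq_bigr => c _; rewrite scalerA.
Qed.

Lemma casimir_cross v w : v \in g -> w \in g ->
  \sum_c eta c *: Phi (lbr (u c) v) (lbr (u c) w) =
  lam *: (dot v w *: \sum_c eta c *: Phi (u c) (u c) - Phi w v).
Proof.
move=> gv gw; have guv c : lbr (u c) v \in g by rewrite lbr_in.
have guw c : lbr (u c) w \in g by rewrite lbr_in.
rewrite (bilin_expand gw gv) !bilin_sum_expand //.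
rewrite scaler_sumr -sumrB scaler_sumr; apply: eq_bigr => i _.
rewrite scaler_sumr -sumrB scaler_sumr; apply: eq_bigr => l _.
rewrite scalerA -scalerBl scalerA; congr (_ *: _).
have -> : \sum_c eta c * (co i (u c) * co l (u c)) = eta i * (i == l)%:R.
  by under eq_bigr do rewrite !co_u mulrCA mulrC; rewrite sum_delta eq_sym.
rewrite mulrA -casimir_cross_f; apply: eq_bigr => c _.
by rewrite !co_lbr_ul.
Qed.

Lemma casimir_tensor_inv z : z \in g ->
  \sum_c eta c *: (Phi (lbr z (u c)) (u c) + Phi (u c) (lbr z (u c))) = 0.
Proof.
move=> gz; have gzu c : lbr z (u c) \in g by rewrite lbr_in.
under eq_bigr do rewrite scalerDr.
rewrite big_split /= !bilin_sum_expand // -big_split big1 // => i _.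
rewrite -big_split big1 // => l _ /=; rewrite -scalerDl.
under eq_bigr do rewrite co_u mulrA.
under [X in _ + X]eq_bigr do rewrite co_u mulrCA mulrC.
rewrite !sum_delta !co_lbr_ur // !mulr_sumr -big_split big1 ?scale0r // => b _ /=.
by rewrite mulrCA [eta i * _]mulrCA -mulrDr f_skew mulr0.
Qed.

End Bilinear.

Definition contr_at m (F : ('I_m -> M) -> M) x i j : M :=
  \sum_c eta c *: F (upd (upd x i (u c)) j (u c)).

Lemma casimir_diag m (F : ('I_m -> M) -> M) x i : inS g F -> in_g g x ->
  \sum_c eta c *: F (upd x i (lbr (u c) (lbr (u c) (x i)))) = (-2 * lam) *: F x.
Proof.
move=> SF gx; have linF := inS_lin_slot SF i gx.
rewrite -(lin_on_sum _ _ linF) => [|c]; last by rewrite !lbr_in.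
by rewrite casimir_scalar // (lin_onZ _ linF (gx i)) upd_id.
Qed.

Lemma casimir_offdiag m (F : ('I_m -> M) -> M) x i j : inS g F -> in_g g x -> j != i ->
  \sum_c eta c *: F (upd (upd x i (lbr (u c) (x i))) j (lbr (u c) (x j))) =
  lam *: (dot (x i) (x j) *: contr_at F x i j - F x).
Proof.
move=> SF gx ji; have ij : i != j by rewrite eq_sym.
have [_ _ symF _] := SF.
rewrite (casimir_cross (Phi := fun p q => F (upd (upd x i p) j q))) ?upd_tperm ?symF //.
- by move=> q gq; exact: inS_lin_slot2l.
- by move=> p gp; exact: inS_lin_slot2r.
Qed.

Lemma casimir_inS m (F : ('I_m -> M) -> M) x : inS g F -> in_g g x ->
  (lam * (m%:R ^+ 2 + m%:R - 2)) *: F x =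
  lam *: \sum_i \sum_(j | j != i) dot (x i) (x j) *: contr_at F x i j.
Proof.
move=> SF gx; have gFx : F x \in g by case: SF => gF _ _ _; exact: gF.
have := casimir_scalar gFx.
under eq_bigr => c _ do rewrite (inS_lbr2 SF lbr_in (u_in c) gx) scaler_sumr.
rewrite exchange_big /=.
under eq_bigr => i _.
  under eq_bigr do rewrite scalerDr.
  rewrite big_split /= casimir_diag //.
  under eq_bigr do rewrite scaler_sumr.
  rewrite exchange_big /=.
  under eq_bigr => j ji do rewrite casimir_offdiag // scalerBr.
  rewrite sumrB -scaler_sumr sum_neq_const.
  over.
rewrite big_split sumrB /= !sumr_const card_ord -scaler_sumr -!scaler_nat.
move: (\sum_i _) => T /matrixP h; apply/matrixP => r s; move: (h r s); rewrite !mxE.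
set A := F x r s; set B := T r s => e; apply/eqP; rewrite -subr_eq0; apply/eqP.
transitivity (- ((m%:R * (-2 * lam * A) + (lam * B - m%:R * (m%:R * (lam * A) - lam * A)))
  - -2 * lam * A)); first by ring.
by rewrite e subrr oppr0.
Qed.

Definition contr m (F : ('I_m.+2 -> M) -> M) (y : 'I_m -> M) : M :=
  \sum_c eta c *: F (cons2 (u c) (u c) y).

Lemma inS_lin_cons2l m (F : ('I_m.+2 -> M) -> M) y q : inS g F -> in_g g y -> q \in g ->
  lin_on g (fun p => F (cons2 p q y)).
Proof.
move=> SF gy gq; have e p : cons2 p q y = upd (cons2 0 q y) ord0 p by rewrite upd_cons2_0.
move=> a v w gv gw /=; rewrite (e (a *: v + w)) (e v) (e w).
exact: (inS_lin_slot SF _ (in_g_cons2 (mem0v g) gq gy)).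
Qed.

Lemma inS_lin_cons2r m (F : ('I_m.+2 -> M) -> M) y p : inS g F -> in_g g y -> p \in g ->
  lin_on g (fun q => F (cons2 p q y)).
Proof.
move=> SF gy gp; have e q : cons2 p q y = upd (cons2 p 0 y) (slot1 m) q by rewrite upd_cons2_1.
move=> a v w gv gw /=; rewrite (e (a *: v + w)) (e v) (e w).
exact: (inS_lin_slot SF _ (in_g_cons2 gp (mem0v g) gy)).
Qed.

Lemma contr_inv m (F : ('I_m.+2 -> M) -> M) z y : inS g F -> z \in g -> in_g g y ->
  lbr z (contr F y) = \sum_i contr F (upd y i (lbr z (y i))).
Proof.
move=> SF gz gy; have [_ _ _ invF] := SF; rewrite /contr lbr_sumr.
have split c : lbr z (eta c *: F (cons2 (u c) (u c) y)) =
    eta c *: (F (cons2 (lbr z (u c)) (u c) y) + F (cons2 (u c) (lbr z (u c)) y)) +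
    eta c *: \sum_i F (cons2 (u c) (u c) (upd y i (lbr z (y i)))).
  rewrite lbrZr (invF _ _ gz (in_g_cons2 (u_in c) (u_in c) gy)) !big_ord_recl.
  rewrite cons2_0 upd_cons2_0 cons2_1 upd_cons2_1 addrA scalerDr; congr (_ + _ *: _).
  by apply: eq_bigr => i _; rewrite cons2_2 cons2_upd.
under eq_bigr do rewrite split.
rewrite big_split /= (casimir_tensor_inv (Phi := fun p q => F (cons2 p q y))) //.
- by rewrite add0r; under eq_bigr do rewrite scaler_sumr; rewrite exchange_big.
- by move=> q gq; exact: inS_lin_cons2l.
- by move=> p gp; exact: inS_lin_cons2r.
Qed.

Lemma inS_contr m (F : ('I_m.+2 -> M) -> M) : inS g F -> inS g (contr F).
Proof.
move=> SF; have [gF linF symF _] := SF; split.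
- by move=> y gy; apply: rpred_sum => c _; apply/rpredZ/gF/in_g_cons2.
- move=> y i a v w gy gv gw; rewrite /contr scaler_sumr -big_split; apply: eq_bigr => c _ /=.
  rewrite !cons2_upd (linF _ _ _ _ _ (in_g_cons2 (u_in c) (u_in c) gy) gv gw).
  by rewrite scalerDr !scalerA mulrC.
- by move=> y s gy; apply: eq_bigr => c _; rewrite cons2_perm symF //; exact: in_g_cons2.
- by move=> z y gz gy; exact: contr_inv.
Qed.

Lemma contr_at_contr m (x : 'I_m.+2 -> M) i j : i != j -> in_g g x ->
  exists2 y, in_g g y & forall F, inS g F -> contr_at F x i j = contr F y.
Proof.
move=> ij gx; pose j' := tperm i ord0 j.
pose s : 'S_m.+2 := (tperm i ord0 * tperm j' (slot1 m))%g.
have j'0 : j' != ord0.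
  by rewrite /j' -(inj_eq (@perm_inj _ (tperm i ord0))) tpermK tpermR eq_sym.
have si : s i = ord0 by rewrite permM tpermL tpermD // eq_sym.
have sj : s j = slot1 m by rewrite permM -/j' tpermL.
pose y t := x ((s^-1)%g (slot2 t)).
have gy : in_g g y by move=> t; exact: gx.
exists y => // F [_ _ symF _]; apply: eq_bigr => c _; congr (_ *: _).
have -> : upd (upd x i (u c)) j (u c) = (fun t => cons2 (u c) (u c) y (s t)).
  apply: functional_extensionality => t.
  case: (eqVneq t j) => [->|tj]; first by rewrite sj cons2_1 upd_same.
  rewrite upd_other //; case: (eqVneq t i) => [->|ti]; first by rewrite si cons2_0 upd_same.
  rewrite upd_other //; case: (cons2P (s t)) => [|| [t' e]].
  - by rewrite -si => /perm_inj e; rewrite e eqxx in ti.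
  - by rewrite -sj => /perm_inj e; rewrite e eqxx in tj.
  - by rewrite e cons2_2 /y -e permK.
by rewrite symF //; exact: in_g_cons2.
Qed.


Lemma contr_comb m (F G : ('I_m.+2 -> M) -> M) a b y :
  contr (fun x => a *: F x + b *: G x) y = a *: contr F y + b *: contr G y.
Proof.
rewrite /contr !scaler_sumr -big_split; apply: eq_bigr => c _ /=.
by rewrite scalerDr !scalerA mulrC [b * _]mulrC.
Qed.

Hypothesis lam_neq0 : lam != 0.

Lemma casimir_coef_neq0 m : m != 1%N -> lam * (m%:R ^+ 2 + m%:R - 2) != 0.
Proof.
move=> m1; rewrite mulf_neq0 // (_ : _ - 2 = (m%:R - 1) * (m%:R + 2)); last by ring.
rewrite mulf_neq0 // ?subr_eq0 ?pnatr_eq1 //.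
by rewrite lt0r_neq0 // ltr_wpDl.
Qed.

Lemma inS0_eq0 (F : ('I_0 -> M) -> M) x : inS g F -> in_g g x -> F x = 0.
Proof.
move=> SF gx; have := casimir_inS SF gx; rewrite big_ord0 scaler0 => /eqP.
by rewrite scaler_eq0 (negbTE (casimir_coef_neq0 _)) // => /eqP.
Qed.

Lemma inS_contr_eq0 m (F : ('I_m.+2 -> M) -> M) :
  inS g F -> (forall y, in_g g y -> contr F y = 0) -> forall x, in_g g x -> F x = 0.
Proof.
move=> SF F0 x gx; have := casimir_inS SF gx.
rewrite big1 ?scaler0 => [/eqP|i _].
  by rewrite scaler_eq0 (negbTE (casimir_coef_neq0 _)) // => /eqP.
rewrite big1 // => j ji; have [|y gy ->] := @contr_at_contr _ x i j _ gx => //.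
  by rewrite eq_sym.
by rewrite F0 // scaler0.
Qed.

Lemma inS_even_eq0 n (F : ('I_n.*2 -> M) -> M) : inS g F -> forall x, in_g g x -> F x = 0.
Proof.
elim: n F => [|n IH] F SF; first by move=> x; exact: inS0_eq0.
apply: (@inS_contr_eq0 n.*2) => // y gy; exact: IH (inS_contr SF) y gy.
Qed.

Hypothesis centralizer_f : forall a (v : I -> RR),
  (forall i, \sum_b v b * f a b i = 0) -> forall b, b != a -> v b = 0.
Hypothesis f_neq0 : forall a b, a != b -> exists c, f a b c != 0.

Lemma centralizer_u a z : z \in g -> lbr (u a) z = 0 -> z = co a z *: u a.
Proof.
move=> gz za; have cz b : b != a -> co b z = 0.
  by apply: (centralizer_f (v := fun b => co b z)) => i; rewrite -co_lbr_ul // za co0.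
rewrite {1}(co_decomp gz) (bigD1 a) //= big1 ?addr0 // => b ba.
by rewrite cz // scale0r.
Qed.

Lemma inS1_scalar (F : ('I_1 -> M) -> M) :
  inS g F -> exists c, forall x, in_g g x -> F x = c *: x ord0.
Proof.
move=> [gF linF _ invF]; pose F1 v := F (fun=> v).
have updc v w i : upd (fun _ : 'I_1 => v) i w = fun=> w.
  by apply: functional_extensionality => t; rewrite /upd [t]ord1 [i]ord1 eqxx.
have lin : lin_on g F1.
  move=> a v w gv gw; have g0 : in_g g (fun _ : 'I_1 => (0 : M)) by move=> i; exact: mem0v.
  by have := linF _ ord0 a v w g0 gv gw; rewrite !updc.
have inv y v : y \in g -> v \in g -> lbr y (F1 v) = F1 (lbr y v).
  by move=> gy gv; rewrite /F1 invF // big_ord1 updc.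
pose la a := co a (F1 (u a)).
have ev a : F1 (u a) = la a *: u a.
  by apply: centralizer_u; [exact: gF | rewrite inv // lbrxx (lin_on0 lin)].
have la_const a b : la a = la b.
  case: (eqVneq a b) => [-> // | ab]; have [c fc] := f_neq0 ab.
  have e1 : F1 (lbr (u a) (u b)) = la b *: lbr (u a) (u b) by rewrite -inv // ev lbrZr.
  have e2 : F1 (lbr (u a) (u b)) = la a *: lbr (u a) (u b).
    rewrite lbrC -scaleN1r (lin_onZ _ lin (lbr_in (u_in b) (u_in a))) -inv // ev lbrZr lbrC.
    by rewrite !scaleN1r !scalerN !opprK.
  have := congr1 (co c) (etrans (esym e1) e2); rewrite !coZ lbr_u co_comb => e.
  by apply: (mulIf fc); rewrite e.
pose c := if [pick a : I] is Some a then la a else 0.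
have la_c a : la a = c by rewrite /c; case: pickP => [b _ | /(_ a) //]; exact: la_const.
exists c => x gx; have -> : F x = F1 (x ord0).
  by congr F; apply: functional_extensionality => t; rewrite [t]ord1.
rewrite (co_decomp (gx ord0)) (lin_on_sum _ _ lin u_in) scaler_sumr; apply: eq_bigr => a _.
by rewrite ev la_c !scalerA mulrC.
Qed.

Lemma inS1_dependent (F G : ('I_1 -> M) -> M) : inS g F -> inS g G -> dependent_on g F G.
Proof.
move=> /inS1_scalar [cF eF] /inS1_scalar [cG eG].
case: (eqVneq cG 0) => [cG0 | cGn0].
  exists 0, 1; split=> [|x gx]; first by rewrite xpair_eqE oner_eq0 andbF.
  by rewrite eG // cG0 !scale0r scaler0 addr0.
exists cG, (- cF); split=> [|x gx]; first by rewrite xpair_eqE (negbTE cGn0).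
by rewrite eF // eG // !scalerA mulrC mulNr scaleNr subrr.
Qed.

Lemma inS_odd_dependent n (F G : ('I_n.*2.+1 -> M) -> M) :
  inS g F -> inS g G -> dependent_on g F G.
Proof.
elim: n F G => [|n IH] F G SF SG; first exact: inS1_dependent.
have [a [b [ab e]]] := IH _ _ (inS_contr SF) (inS_contr SG).
exists a, b; split => //; apply: (@inS_contr_eq0 n.*2.+1) => [|y gy].
  exact: inS_comb.
by rewrite contr_comb e.
Qed.

Lemma inS_odd_multiple n (F G : ('I_n.*2.+1 -> M) -> M) x0 :
  inS g F -> inS g G -> in_g g x0 -> G x0 != 0 ->
  exists c, forall x, in_g g x -> F x = c *: G x.
Proof.
move=> SF SG gx0 Gx0; have [a [b [ab e]]] := inS_odd_dependent SF SG.
have a0 : a != 0.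
  apply: contraNneq ab => a0; move: (e x0 gx0).
  rewrite a0 scale0r add0r => /eqP; rewrite scaler_eq0 (negbTE Gx0) orbF => /eqP ->.
  by rewrite eqxx.
exists (- b / a) => x gx; apply: (scalerI a0).
by rewrite scalerA mulrCA divff // mulr1 scaleNr; apply/eqP; rewrite -addr_eq0 e.
Qed.

Lemma u_neq0 a : u a != 0.
Proof. by apply: contra_neq (oner_neq0 RR) => ua0; have := co_u a a; rewrite ua0 co0 eqxx => ->. Qed.

(* By [kform_basis], this says [kform g (u a) (u a) != 0]. *)
Hypothesis killing_f_neq0 : exists a, \sum_b \sum_c f a b c * f a c b != 0.

Theorem inS_classification n :
  (forall B : ('I_(n.*2) -> M) -> M, inS g B -> forall x, in_g g x -> B x = 0) /\
  (inS g (Bn g n) /\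
   forall B : ('I_(n.*2.+1) -> M) -> M,
     inS g B -> exists c : RR, forall x, in_g g x -> B x = c *: Bn g n x).
Proof.
split; first exact: inS_even_eq0.
have SBn := inS_Bn lbr_in n; split=> // B SB.
have [a Ka] := killing_f_neq0.
apply: (inS_odd_multiple (x0 := fun=> u a)) => //.
rewrite Bn_const kform_basis scaler_eq0 negb_or u_neq0 andbT.
by rewrite mulf_neq0 ?pnatr_eq0 // expf_neq0 // mulf_neq0 // invr_eq0 pnatr_eq0.
Qed.

End Casimir.

(** * sl_2(R) and so(3) *)

Definition o30 : 'I_3 := ord0.
Definition o31 : 'I_3 := lift ord0 ord0.
Definition o32 : 'I_3 := lift ord0 (lift ord0 ord0).
Definition o20 : 'I_2 := ord0.
Definition o21 : 'I_2 := lift ord0 ord0.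

Lemma ord3P (a : 'I_3) : [\/ a = o30, a = o31 | a = o32].
Proof. by case: a => [[|[|[|a]]] Ha]; [apply: Or31|apply: Or32|apply: Or33|]; rewrite //; exact: val_inj. Qed.

Lemma ord2P (a : 'I_2) : a = o20 \/ a = o21.
Proof. by case: a => [[|[|a]] Ha]; [left|right|]; rewrite //; exact: val_inj. Qed.

Lemma sum3 (V : zmodType) (F : 'I_3 -> V) : \sum_a F a = F o30 + F o31 + F o32.
Proof. by rewrite !big_ord_recl big_ord0 addr0 addrA. Qed.

Lemma sum2 (V : zmodType) (F : 'I_2 -> V) : \sum_a F a = F o20 + F o21.
Proof. by rewrite !big_ord_recl big_ord0 addr0. Qed.

Definition eps3 (a b c : 'I_3) : RR :=
  match nat_of_ord a, nat_of_ord b, nat_of_ord c with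
  | 0, 1, 2 | 1, 2, 0 | 2, 0, 1 => 1
  | 0, 2, 1 | 2, 1, 0 | 1, 0, 2 => -1
  | _, _, _ => 0
  end.

Definition sl2_eta (a : 'I_3) : RR := if nat_of_ord a is 2 then -1 else 1.
(* For the basis h, e + f, e - f of [sl2_basis]:
   [u0, u1] = 2 u2, [u0, u2] = 2 u1, [u1, u2] = -2 u0. *)
Definition sl2_f (a b c : 'I_3) : RR := -2 * eps3 a b c * sl2_eta c.
Definition so3_eta (a : 'I_3) : RR := 1.

Ltac case3 a := case: (ord3P a) => ->.
Ltac case2 a := case: (ord2P a) => ->.
Ltac simpl3 := rewrite /sl2_f /sl2_eta /so3_eta /eps3 /o30 /o31 /o32 /o20 /o21 /=.

Lemma sl2_casimir_f (v : 'I_3 -> RR) l :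
  \sum_c sl2_eta c * (\sum_i (\sum_b v b * sl2_f c b i) * sl2_f c i l) = -2 * -4 * v l.
Proof. by rewrite !sum3; case3 l; simpl3; ring. Qed.

Lemma so3_casimir_f (v : 'I_3 -> RR) l :
  \sum_c so3_eta c * (\sum_i (\sum_b v b * eps3 c b i) * eps3 c i l) = -2 * 1 * v l.
Proof. by rewrite !sum3; case3 l; simpl3; ring. Qed.

Lemma sl2_casimir_cross_f (v w : 'I_3 -> RR) i l :
  \sum_c sl2_eta c * ((\sum_b v b * sl2_f c b i) * (\sum_d w d * sl2_f c d l)) =
  -4 * ((\sum_a sl2_eta a * v a * w a) * sl2_eta i * (i == l)%:R - w i * v l).
Proof. by rewrite !sum3; case3 i; case3 l; simpl3; ring. Qed.

Lemma so3_casimir_cross_f (v w : 'I_3 -> RR) i l :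
  \sum_c so3_eta c * ((\sum_b v b * eps3 c b i) * (\sum_d w d * eps3 c d l)) =
  1 * ((\sum_a so3_eta a * v a * w a) * so3_eta i * (i == l)%:R - w i * v l).
Proof. by rewrite !sum3; case3 i; case3 l; simpl3; ring. Qed.

Lemma sl2_f_skew a i l : sl2_eta l * sl2_f a l i + sl2_eta i * sl2_f a i l = 0.
Proof. by case3 a; case3 i; case3 l; simpl3; ring. Qed.

Lemma so3_f_skew a i l : so3_eta l * eps3 a l i + so3_eta i * eps3 a i l = 0.
Proof. by case3 a; case3 i; case3 l; simpl3; ring. Qed.

Lemma sl2_centralizer_f a (v : 'I_3 -> RR) :
  (forall i, \sum_b v b * sl2_f a b i = 0) -> forall b, b != a -> v b = 0.
Proof.
move=> h b; move: (h o30) (h o31) (h o32); rewrite !sum3.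
by case3 a; case3 b; simpl3 => // *; lra.
Qed.

Lemma so3_centralizer_f a (v : 'I_3 -> RR) :
  (forall i, \sum_b v b * eps3 a b i = 0) -> forall b, b != a -> v b = 0.
Proof.
move=> h b; move: (h o30) (h o31) (h o32); rewrite !sum3.
by case3 a; case3 b; simpl3 => // *; lra.
Qed.

Lemma sl2_f_neq0 a b : a != b -> exists c, sl2_f a b c != 0.
Proof.
case3 a; case3 b; simpl3 => // _;
  by first [exists o30; simpl3; apply/eqP; lra | exists o31; simpl3; apply/eqP; lra
           | exists o32; simpl3; apply/eqP; lra].
Qed.

Lemma so3_f_neq0 a b : a != b -> exists c, eps3 a b c != 0.
Proof.
case3 a; case3 b; simpl3 => // _;
  by first [exists o30; simpl3; apply/eqP; lra | exists o31; simpl3; apply/eqP; lra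
           | exists o32; simpl3; apply/eqP; lra].
Qed.

Lemma sl2_killing_f_neq0 : exists a, \sum_b \sum_c sl2_f a b c * sl2_f a c b != 0.
Proof. by exists o30; rewrite !sum3; simpl3; apply/eqP; lra. Qed.

Lemma so3_killing_f_neq0 : exists a, \sum_b \sum_c eps3 a b c * eps3 a c b != 0.
Proof. by exists o30; rewrite !sum3; simpl3; apply/eqP; lra. Qed.

Definition sl2_basis (a : 'I_3) : 'M[RR]_2 := \matrix_(i, j)
  match nat_of_ord a, nat_of_ord i, nat_of_ord j with
  | 0, 0, 0 | 1, 0, 1 | 1, 1, 0 | 2, 0, 1 => 1
  | 0, 1, 1 | 2, 1, 0 => -1
  | _, _, _ => 0
  end.

Definition sl2_coord (a : 'I_3) (x : 'M[RR]_2) : RR :=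
  match nat_of_ord a with
  | 0 => x o20 o20
  | 1 => (x o20 o21 + x o21 o20) / 2
  | _ => (x o20 o21 - x o21 o20) / 2
  end.

Section SL2.
Variable g : {vspace 'M[RR]_2}.
Hypothesis g_sl2 : forall A : 'M[RR]_2, (A \in g) = (\tr A == 0).

Lemma sl2_coord_linear a c (x y : 'M[RR]_2) :
  sl2_coord a (c *: x + y) = c * sl2_coord a x + sl2_coord a y.
Proof. by case3 a; rewrite /sl2_coord /= !mxE; ring. Qed.

Lemma sl2_basis_in a : sl2_basis a \in g.
Proof. by rewrite g_sl2 /mxtrace sum2 !mxE; case3 a; simpl3; apply/eqP; lra. Qed.

Lemma sl2_coord_basis a b : sl2_coord a (sl2_basis b) = (a == b)%:R.
Proof. by case3 a; case3 b; rewrite /sl2_coord !mxE; simpl3; lra. Qed.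

Lemma sl2_decomp x : x \in g -> x = \sum_a sl2_coord a x *: sl2_basis a.
Proof.
rewrite g_sl2 /mxtrace sum2 => /eqP tr0; apply/matrixP => i j.
by rewrite summxE sum3 !mxE; move: tr0; case2 i; case2 j; rewrite /sl2_coord; simpl3 => *; lra.
Qed.

Lemma sl2_lbr_basis a b : lbr (sl2_basis a) (sl2_basis b) = \sum_c sl2_f a b c *: sl2_basis c.
Proof.
apply/matrixP => i j; rewrite /lbr !mxE !summxE !sum3 !sum2 !mxE.
by case3 a; case3 b; case2 i; case2 j; simpl3; ring.
Qed.

End SL2.

Definition so3_basis (a : 'I_3) : 'M[RR]_3 := \matrix_(i, j)
  match nat_of_ord a, nat_of_ord i, nat_of_ord j with
  | 0, 2, 1 | 1, 0, 2 | 2, 1, 0 => 1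
  | 0, 1, 2 | 1, 2, 0 | 2, 0, 1 => -1
  | _, _, _ => 0
  end.

Definition so3_coord (a : 'I_3) (x : 'M[RR]_3) : RR :=
  match nat_of_ord a with
  | 0 => x o32 o31
  | 1 => x o30 o32
  | _ => x o31 o30
  end.

Section SO3.
Variable g : {vspace 'M[RR]_3}.
Hypothesis g_so3 : forall A : 'M[RR]_3, (A \in g) = (A^T == - A).

Lemma so3_coord_linear a c (x y : 'M[RR]_3) :
  so3_coord a (c *: x + y) = c * so3_coord a x + so3_coord a y.
Proof. by case3 a; rewrite /so3_coord /= !mxE; ring. Qed.

Lemma so3_basis_in a : so3_basis a \in g.
Proof. by rewrite g_so3; apply/eqP/matrixP => i j; rewrite !mxE; case3 a; case3 i; case3 j; simpl3; lra. Qed.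

Lemma so3_coord_basis a b : so3_coord a (so3_basis b) = (a == b)%:R.
Proof. by case3 a; case3 b; rewrite /so3_coord !mxE; simpl3; lra. Qed.

Lemma so3_decomp x : x \in g -> x = \sum_a so3_coord a x *: so3_basis a.
Proof.
rewrite g_so3 => /eqP/matrixP skew.
have xT i j : x j i = - x i j by have := skew i j; rewrite !mxE.
apply/matrixP => i j; rewrite summxE sum3 !mxE.
move: (xT o30 o30) (xT o30 o31) (xT o30 o32) (xT o31 o30) (xT o31 o31) (xT o31 o32).
move: (xT o32 o30) (xT o32 o31) (xT o32 o32).
by case3 i; case3 j; rewrite /so3_coord; simpl3 => *; lra.
Qed.

Lemma so3_lbr_basis a b : lbr (so3_basis a) (so3_basis b) = \sum_c eps3 a b c *: so3_basis c.
Proof.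
apply/matrixP => i j; rewrite /lbr !mxE !summxE !sum3 !mxE.
by case3 a; case3 b; case3 i; case3 j; simpl3; ring.
Qed.

End SO3.

Theorem corollary3 :
  forall (k : nat) (g : {vspace 'M[RR]_k}),
    (k = 2%N /\ (forall A : 'M[RR]_k, (A \in g) = (\tr A == 0))) \/
    (k = 3%N /\ (forall A : 'M[RR]_k, (A \in g) = (A^T == - A))) ->
  forall n : nat, (0 < n)%N ->
    (forall B : ('I_(n.*2) -> 'M[RR]_k) -> 'M[RR]_k,
        inS g B -> forall x, in_g g x -> B x = 0) /\
    (inS g (Bn g n) /\
     forall B : ('I_(n.*2.+1) -> 'M[RR]_k) -> 'M[RR]_k,
        inS g B -> exists c : RR, forall x, in_g g x -> B x = c *: Bn g n x).
Proof.
move=> k g [[k2 g_sl2]|[k3 g_so3]] n _; subst k.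
- have lam_neq0 : (-4 : RR) != 0 by apply/eqP; lra.
  exact: (inS_classification sl2_coord_linear (sl2_basis_in g_sl2) sl2_coord_basis
    (sl2_decomp g_sl2) sl2_lbr_basis sl2_casimir_f sl2_casimir_cross_f sl2_f_skew lam_neq0
    sl2_centralizer_f sl2_f_neq0 sl2_killing_f_neq0).
- exact: (inS_classification so3_coord_linear (so3_basis_in g_so3) so3_coord_basis
    (so3_decomp g_so3) so3_lbr_basis so3_casimir_f so3_casimir_cross_f so3_f_skew (oner_neq0 RR)
    so3_centralizer_f so3_f_neq0 so3_killing_f_neq0).
Qed.
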